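(* Let $a,b>0$, $M\ge 1$ and consider solutions $\mathbf u(t)=(u_x(t))_{x\in\mathbb Z}$ of the mean-field equations with initial values in $[0,1]^{\mathbb Z}$. (i) If expansion occurs, then there are $u,L,x_0,\delta,c>0$ with $u_-<u<u_+$ such that: whenever $u_x(0)\ge u$ for all $|x|\le L$, we have $u_x(t)\ge u+\delta$ for all $t>0$ and all $x$ with $|x|\le ct-x_0$. (ii) If retreat occurs, then there are $u,L,x_0,\delta,c>0$ with $0<u<u_-$ (when $a+b<4$, the requirement $u<u_-$ is dropped) such that: whenever $u_x(0)\le u$ for all $|x|\le L$, we have $u_x(t)\le u-\delta$ for all $t>0$ and all $x$ with $|x|\le ct-x_0$.
   Context: Fix parameters $a,b>0$ and an integer $M\ge 1$ (dispersal range). For $x,y\in\mathbb Z$ write $y\sim x$ iff $0<|x-y|\le M$. The mean-field equations are the system $$u_x'=\Big(a u_x^2+\frac{b}{2M}\sum_{y\sim x}u_y^2\Big)(1-u_x)-u_x,\qquad x\in\mathbb Z,$$ for $\mathbf u(t)=(u_x(t))_{x\in\mathbb Z}$; for every initial value in $[0,1]^{\mathbb Z}$ it has a unique global solution, which stays in $[0,1]^{\mathbb Z}$. Let $r=a+b$. When $r>4$ put $w=(1/4-1/r)^{1/2}$, $u_-=1/2-w$, $u_+=1/2+w$ (the nonzero zeros of $ru^2(1-u)-u$); when $r=4$ put $u_-=u_+=1/2$. Expansion (defined for $r>4$): there is $u$ with $u_-<u<u_+$ such that the solution with $u_x(0)=u\,\mathbf 1(x\le 0)$ satisfies $u_1(t_0)=u$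 for some $t_0>0$. Retreat (for $r\ge4$): there are $u_*,u^*$ with $0<u_*<u_-\le u_+<u^*\le 1$ such that the solution with $u_x(0)=u^*\mathbf 1(x<0)+u_*\mathbf 1(x\ge 0)$ satisfies $u_{-1}(t_0)=u_*$ for some $t_0>0$. By convention, retreat is also said to occur whenever $r<4$. *)

From Stdlib Require Import Reals Lra ZArith List.
Open Scope R_scope.

Definition nbr_sq_sum (M : nat) (f : Z -> R) (x : Z) : R :=
  fold_right (fun k acc =>
      f (x + Z.of_nat k)%Z ^ 2 + f (x - Z.of_nat k)%Z ^ 2 + acc)
    0 (seq 1 M).

Definition mf_rhs (a b : R) (M : nat) (f : Z -> R) (x : Z) : R :=
  (a * f x ^ 2 + b / (2 * INR M) * nbr_sq_sum M f x) * (1 - f x) - f x.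

Definition mf_solution (a b : R) (M : nat) (u : R -> Z -> R) : Prop :=
  (forall t x, 0 <= t -> 0 <= u t x <= 1) /\
  (forall x, forall eps, 0 < eps -> exists d, 0 < d /\
       forall t, 0 <= t < d -> Rabs (u t x - u 0 x) < eps) /\
  (forall t x, 0 < t -> derivable_pt_lim (fun s => u s x) t (mf_rhs a b M (u t) x)).

Definition u_minus (a b : R) : R := / 2 - sqrt (/ 4 - / (a + b)).
Definition u_plus (a b : R) : R := / 2 + sqrt (/ 4 - / (a + b)).

Definition expansion (a b : R) (M : nat) : Prop :=
  4 < a + b /\
  exists u, u_minus a b < u < u_plus a b /\
    exists v, mf_solution a b M v /\
      (forall x, v 0 x = if Z.leb x 0 then u else 0) /\
      exists t0, 0 < t0 /\ v t0 1%Z = u.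

Definition retreat (a b : R) (M : nat) : Prop :=
  a + b < 4 \/
  (4 <= a + b /\
   exists ulow uhigh,
     0 < ulow < u_minus a b /\ u_minus a b <= u_plus a b /\
     u_plus a b < uhigh <= 1 /\
     exists v, mf_solution a b M v /\
       (forall x, v 0 x = if Z.ltb x 0 then uhigh else ulow) /\
       exists t0, 0 < t0 /\ v t0 (-1)%Z = ulow).

(* Because the coupling has finite range M, the comparison principle holds in a quantitative
   local form: on a short time window, an error between a subsolution and a supersolution that
   is present only outside a set G is halved at every M sites further inside G.  Expansion
   (resp. retreat) provides a front that advances by one site in time t0; comparing a solution
   with translates of this front moves the region where it is close to the level p outwards by
   one site per t0, at the cost of a small error.  Since the reaction r u^2 (1 - u) - u has a
   strict sign between the relevant levels, spatially constant ramps are sub- or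
   supersolutions, and over a fixed time they absorb the accumulated error.  Alternating the
   two makes the region grow linearly in time.  When a + b < 4 the reaction is negative on
   [1/2, 1], so every solution drops below 1/2 after a fixed time. *)

From Stdlib Require Import Reals ZArith Lra Lia List.
Open Scope R_scope.

Definition right_cont (g : R -> R) (s : R) : Prop :=
  forall eps, 0 < eps -> exists d, 0 < d /\
    forall t, s <= t < s + d -> Rabs (g t - g s) < eps.

Lemma derivable_pt_lim_near g q l : derivable_pt_lim g q l ->
  forall eps, 0 < eps -> exists d, 0 < d /\
    forall t, Rabs (t - q) < d -> Rabs (g t - g q) < eps.
Proof.
  intros Hg eps Heps.
  assert (Hc : continuity_pt g q) by (apply derivable_continuous_pt; exists l; exact Hg).
  destruct (Hc eps Heps) as [d [Hd Hclose]].
  exists d; split; [exact Hd|]. intros t Ht.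
  destruct (Req_dec t q) as [->|Htq].
  - rewrite Rminus_diag, Rabs_R0; exact Heps.
  - apply (Hclose t); split; [split; [exact I|congruence]|exact Ht].
Qed.

Lemma derivable_pt_lim_right_cont g q l : derivable_pt_lim g q l -> right_cont g q.
Proof.
  intros Hg eps Heps. destruct (derivable_pt_lim_near g q l Hg eps Heps) as [d [Hd Hclose]].
  exists d; split; [exact Hd|]. intros t Ht. apply Hclose. rewrite Rabs_right; lra.
Qed.

Lemma last_time_below (g G : R -> R) s t e0 : s <= t -> g s <= e0 ->
  (forall q, s < q <= t -> derivable_pt_lim g q (G q)) ->
  exists s0, s <= s0 <= t /\ g s0 <= e0 /\ forall x, s0 < x <= t -> e0 < g x.
Proof.
  intros Hst Hs Hd.
  set (Below := fun x => s <= x <= t /\ g x <= e0).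
  destruct (completeness Below) as [s0 [Hub Hlub]].
  { exists t; intros x [Hx _]; lra. }
  { exists s; split; [lra|exact Hs]. }
  assert (Hs0 : s <= s0 <= t).
  { split; [apply Hub; split; [lra|exact Hs]|apply Hlub; intros x [Hx _]; lra]. }
  exists s0; split; [exact Hs0|split].
  - destruct (Rle_or_lt (g s0) e0) as [H|H]; [exact H|exfalso].
    destruct (Req_dec s0 s) as [E|E]; [rewrite E in H; lra|].
    destruct (derivable_pt_lim_near g s0 (G s0) (Hd s0 ltac:(lra)) (g s0 - e0))
      as [d [Hd0 Hclose]]; [lra|].
    assert (s0 <= s0 - d / 2); [|lra].
    apply Hlub. intros x [Hx Hgx].
    destruct (Rle_or_lt x (s0 - d / 2)) as [Hle|Hgt]; [exact Hle|exfalso].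
    assert (x <= s0) by (apply Hub; split; assumption).
    assert (Habs : Rabs (g x - g s0) < g s0 - e0) by (apply Hclose; rewrite Rabs_left1; lra).
    apply Rabs_def2 in Habs. lra.
  - intros x Hx. destruct (Rle_or_lt (g x) e0) as [H|H]; [|exact H].
    assert (x <= s0) by (apply Hub; split; [lra|exact H]). lra.
Qed.

Lemma slope_bound_above (g G : R -> R) s t e0 K :
  s <= t -> 0 <= K -> right_cont g s -> g s <= e0 ->
  (forall q, s < q <= t -> derivable_pt_lim g q (G q)) ->
  (forall q, s < q <= t -> e0 < g q -> G q <= K) ->
  g t <= e0 + K * (t - s).
Proof.
  intros Hst HK Hrc Hs Hd HG.
  destruct (Rle_or_lt (g t) (e0 + K * (t - s))) as [Hok|Hbad]; [exact Hok|exfalso].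
  destruct (last_time_below g G s t e0 Hst Hs Hd) as [s0 [Hs0 [Hg0 Habove]]].
  assert (Hs0t : s0 < t).
  { destruct (Req_dec s0 t) as [E|E]; [|lra]. subst s0.
    assert (0 <= K * (t - s)) by (apply Rmult_le_pos; lra). lra. }
  assert (Hrc0 : right_cont g s0).
  { destruct (Req_dec s0 s) as [->|E]; [exact Hrc|].
    apply (derivable_pt_lim_right_cont g s0 (G s0)), Hd. lra. }
  set (eps := g t - e0 - K * (t - s)).
  destruct (Hrc0 eps ltac:(unfold eps; lra)) as [d [Hd0 Hclose]].
  set (s1 := s0 + Rmin d (t - s0) / 2).
  assert (Hmin : 0 < Rmin d (t - s0) <= d /\ Rmin d (t - s0) <= t - s0).
  { split; [split; [apply Rmin_glb_lt; lra|apply Rmin_l]|apply Rmin_r]. }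
  assert (Hgs1 : Rabs (g s1 - g s0) < eps) by (apply Hclose; unfold s1; lra).
  apply Rabs_def2 in Hgs1.
  destruct (MVT_cor2 g G s1 t) as [c [Hmvt Hc]]; [unfold s1; lra| |].
  { intros c Hc. apply Hd. unfold s1 in Hc; lra. }
  assert (HGc : G c <= K) by (apply HG; [|apply Habove]; unfold s1 in Hc; lra).
  assert (G c * (t - s1) <= K * (t - s)).
  { apply Rle_trans with (K * (t - s1)).
    - apply Rmult_le_compat_r; unfold s1; lra.
    - apply Rmult_le_compat_l; unfold s1; lra. }
  unfold eps in *. lra.
Qed.

Lemma exists_nat_ge x : exists k : nat, x <= INR k.
Proof.
  destruct (archimed x) as [H1 _].
  destruct (Z_le_gt_dec 0 (up x)) as [Hz|Hz].
  - exists (Z.to_nat (up x)). rewrite INR_IZR_INZ, Z2Nat.id by exact Hz. lra.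
  - exists 0%nat. assert (Hz0 : (up x <= 0)%Z) by lia. apply IZR_le in Hz0. simpl. lra.
Qed.

Lemma exists_nat_floor y : 0 <= y -> exists i : nat, INR i <= y < INR i + 1.
Proof.
  intros Hy. destruct (base_Int_part y) as [H1 H2].
  assert (Hz : (0 <= Int_part y)%Z).
  { destruct (Z_le_gt_dec 0 (Int_part y)) as [h|h]; [exact h|].
    assert (Hh : (Int_part y <= -1)%Z) by lia. apply IZR_le in Hh. lra. }
  exists (Z.to_nat (Int_part y)). rewrite INR_IZR_INZ, Z2Nat.id by exact Hz. lra.
Qed.

Lemma exists_pow_half_le C eps : 0 < eps -> exists n : nat, C * (/ 2) ^ n <= eps.
Proof.
  intros Heps. pose proof (Rabs_pos C) as HC.
  destruct (pow_lt_1_zero (/ 2) ltac:(rewrite Rabs_right; lra) (eps / (Rabs C + 1)))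
    as [n Hn]; [apply Rdiv_lt_0_compat; lra|].
  exists n. specialize (Hn n (le_n n)). rewrite Rabs_right in Hn by (apply Rle_ge, pow_le; lra).
  pose proof (pow_le (/ 2) n ltac:(lra)).
  assert (C * (/ 2) ^ n <= Rabs C * (/ 2) ^ n) by (apply Rmult_le_compat_r; [lra|apply Rle_abs]).
  assert (Hlt : (Rabs C + 1) * (/ 2) ^ n < (Rabs C + 1) * (eps / (Rabs C + 1)))
    by (apply Rmult_lt_compat_l; lra).
  replace ((Rabs C + 1) * (eps / (Rabs C + 1))) with eps in Hlt by (field; lra). nra.
Qed.

Lemma le_0_of_le_pow_half x C : (forall n, x <= C * (/ 2) ^ n) -> x <= 0.
Proof.
  intros H. destruct (Rle_or_lt x 0) as [Hx|Hx]; [exact Hx|].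
  destruct (exists_pow_half_le C (x / 2) ltac:(lra)) as [n Hn].
  specialize (H n). lra.
Qed.

Lemma sq_diff_le (f h m : R) : 0 <= f <= 1 -> 0 <= h <= 1 -> 0 <= m -> f - h <= m ->
  f ^ 2 - h ^ 2 <= 2 * m.
Proof. intros. nra. Qed.

Lemma nbr_sq_sum_nonneg M f x : 0 <= nbr_sq_sum M f x.
Proof.
  unfold nbr_sq_sum. induction (seq 1 M) as [|k l IH]; cbn [fold_right]; [lra|].
  pose proof (pow2_ge_0 (f (x + Z.of_nat k)%Z)).
  pose proof (pow2_ge_0 (f (x - Z.of_nat k)%Z)). lra.
Qed.

Lemma nbr_sq_sum_const M c x : nbr_sq_sum M (fun _ => c) x = 2 * INR M * c ^ 2.
Proof.
  unfold nbr_sq_sum. rewrite <- (length_seq M 1) at 2.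
  induction (seq 1 M) as [|k l IH]; cbn [fold_right length]; [simpl; lra|].
  rewrite IH, S_INR. lra.
Qed.

Lemma nbr_sq_sum_diff_le M (f h : Z -> R) x m :
  (forall y, 0 <= f y <= 1) -> (forall y, 0 <= h y <= 1) -> 0 <= m ->
  (forall y, (Z.abs (y - x) <= Z.of_nat M)%Z -> f y - h y <= m) ->
  nbr_sq_sum M f x - nbr_sq_sum M h x <= INR M * (4 * m).
Proof.
  intros Hf Hh Hm0 Hclose. unfold nbr_sq_sum. rewrite <- (length_seq M 1) at 3.
  assert (Hseq : forall k, In k (seq 1 M) ->
            f (x + Z.of_nat k)%Z - h (x + Z.of_nat k)%Z <= m /\
            f (x - Z.of_nat k)%Z - h (x - Z.of_nat k)%Z <= m).
  { intros k Hk. apply in_seq in Hk. split; apply Hclose; lia. }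
  induction (seq 1 M) as [|k l IH]; cbn [fold_right length]; [simpl; lra|].
  destruct (Hseq k (or_introl eq_refl)) as [Hp Hm].
  specialize (IH (fun j Hj => Hseq j (or_intror Hj))).
  pose proof (sq_diff_le _ _ _ (Hf (x + Z.of_nat k)%Z) (Hh (x + Z.of_nat k)%Z) Hm0 Hp).
  pose proof (sq_diff_le _ _ _ (Hf (x - Z.of_nat k)%Z) (Hh (x - Z.of_nat k)%Z) Hm0 Hm).
  rewrite S_INR. lra.
Qed.

Lemma nbr_sq_sum_translate M f c y :
  nbr_sq_sum M (fun x => f (x - c)%Z) y = nbr_sq_sum M f (y - c)%Z.
Proof.
  unfold nbr_sq_sum. induction (seq 1 M) as [|k l IH]; cbn [fold_right]; [reflexivity|].
  rewrite IH. replace (y + Z.of_nat k - c)%Z with (y - c + Z.of_nat k)%Z by lia.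
  replace (y - Z.of_nat k - c)%Z with (y - c - Z.of_nat k)%Z by lia. reflexivity.
Qed.

Lemma nbr_sq_sum_reflect M f y :
  nbr_sq_sum M (fun x => f (- x)%Z) y = nbr_sq_sum M f (- y)%Z.
Proof.
  unfold nbr_sq_sum. induction (seq 1 M) as [|k l IH]; cbn [fold_right]; [reflexivity|].
  rewrite IH. replace (- (y + Z.of_nat k))%Z with (- y - Z.of_nat k)%Z by lia.
  replace (- (y - Z.of_nat k))%Z with (- y + Z.of_nat k)%Z by lia. ring.
Qed.

Definition reaction (r y : R) : R := r * y ^ 2 * (1 - y) - y.

Lemma mf_rhs_const a b M c y : (1 <= M)%nat ->
  mf_rhs a b M (fun _ => c) y = reaction (a + b) c.
Proof.
  intros HM. unfold mf_rhs, reaction. rewrite nbr_sq_sum_const.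
  assert (0 < INR M) by (apply lt_0_INR; lia). field. lra.
Qed.

(* Writing the right-hand side as [P * (1 - f x) - f x], the increment of [P] is controlled
   by the neighbourhood, and the factor [1 - f x] only helps when [f x > h x]. *)
Lemma mf_rhs_diff_le a b M f h x m : 0 < a -> 0 < b -> (1 <= M)%nat ->
  (forall y, 0 <= f y <= 1) -> (forall y, 0 <= h y <= 1) ->
  (forall y, (Z.abs (y - x) <= Z.of_nat M)%Z -> f y - h y <= m) -> h x < f x ->
  mf_rhs a b M f x - mf_rhs a b M h x <= 2 * (a + b) * m.
Proof.
  intros Ha Hb HM Hf Hh Hclose Hx.
  assert (HMpos : 0 < INR M) by (apply lt_0_INR; lia).
  assert (Hm : f x - h x <= m) by (apply Hclose; lia).
  assert (Hm0 : 0 <= m) by lra.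
  pose proof (nbr_sq_sum_diff_le M f h x m Hf Hh Hm0 Hclose) as Hnbr.
  pose proof (nbr_sq_sum_nonneg M h x).
  pose proof (sq_diff_le _ _ _ (Hf x) (Hh x) Hm0 Hm).
  pose proof (Hf x). pose proof (Hh x).
  set (beta := b / (2 * INR M)).
  assert (Hbeta : 0 < beta) by (apply Rdiv_lt_0_compat; lra).
  assert (Hbm : beta * (INR M * (4 * m)) = 2 * b * m) by (unfold beta; field; lra).
  set (Pf := a * f x ^ 2 + beta * nbr_sq_sum M f x).
  set (Ph := a * h x ^ 2 + beta * nbr_sq_sum M h x).
  assert (HPh : 0 <= Ph) by (unfold Ph; nra).
  assert (HP : Pf - Ph <= 2 * (a + b) * m).
  { assert (beta * (nbr_sq_sum M f x - nbr_sq_sum M h x) <= beta * (INR M * (4 * m)))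
      by (apply Rmult_le_compat_l; lra).
    unfold Pf, Ph. nra. }
  unfold mf_rhs. fold beta Pf Ph.
  replace (Pf * (1 - f x) - f x - (Ph * (1 - h x) - h x))
    with ((Pf - Ph) * (1 - f x) - (Ph + 1) * (f x - h x)) by ring.
  assert (0 <= (Ph + 1) * (f x - h x)) by nra.
  assert ((Pf - Ph) * (1 - f x) <= 2 * (a + b) * m).
  { destruct (Rle_or_lt (Pf - Ph) 0); nra. }
  lra.
Qed.

Definition solution_from a b M (w : R -> Z -> R) (s0 : R) : Prop :=
  (forall t x, s0 <= t -> 0 <= w t x <= 1) /\
  (forall x, right_cont (fun t => w t x) s0) /\
  (forall t x, s0 < t -> derivable_pt_lim (fun q => w q x) t (mf_rhs a b M (w t) x)).

Definition diff_ineq_on (P : R -> R -> Prop) a b M (w : R -> Z -> R) (s S : R) : Prop :=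
  (forall t y, s <= t <= s + S -> 0 <= w t y <= 1) /\
  (forall y, right_cont (fun q => w q y) s) /\
  exists dw : R -> Z -> R, forall t y, s < t <= s + S ->
    derivable_pt_lim (fun q => w q y) t (dw t y) /\ P (dw t y) (mf_rhs a b M (w t) y).

Notation subsol_on := (diff_ineq_on Rle).
Notation supersol_on := (diff_ineq_on Rge).

Definition translate (w : R -> Z -> R) (s0 : R) (c : Z) : R -> Z -> R :=
  fun t x => w (t - s0) (x - c)%Z.

Definition reflect (w : R -> Z -> R) : R -> Z -> R := fun t x => w t (- x)%Z.

Lemma mf_solution_from a b M v : mf_solution a b M v -> solution_from a b M v 0.
Proof.
  intros [Hb [Hc Hd]]. split; [exact Hb|split; [|exact Hd]].
  intros x eps Heps. destruct (Hc x eps Heps) as [d [Hd0 Hclose]].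
  exists d; split; [exact Hd0|]. intros t Ht. apply Hclose. lra.
Qed.

Lemma translate_solution_from a b M w s0 s1 c : solution_from a b M w s0 ->
  solution_from a b M (translate w s1 c) (s0 + s1).
Proof.
  intros [Hb [Hc Hd]]. unfold translate. split; [|split].
  - intros t x Ht. apply Hb. lra.
  - intros x eps Heps. destruct (Hc (x - c)%Z eps Heps) as [d [Hd0 Hclose]].
    exists d; split; [exact Hd0|]. intros t Ht.
    replace (s0 + s1 - s1) with s0 by ring. apply Hclose. lra.
  - intros t x Ht. unfold mf_rhs. rewrite nbr_sq_sum_translate.
    intros eps Heps. destruct (Hd (t - s1) (x - c)%Z ltac:(lra) eps Heps) as [d Hclose].
    exists d. intros h Hh Hhd. replace (t + h - s1) with (t - s1 + h) by ring.
    apply Hclose; assumption.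
Qed.

Lemma reflect_solution_from a b M w s0 : solution_from a b M w s0 ->
  solution_from a b M (reflect w) s0.
Proof.
  intros [Hb [Hc Hd]]. unfold reflect. split; [|split].
  - intros t x Ht. apply Hb, Ht.
  - intros x. apply Hc.
  - intros t x Ht. unfold mf_rhs. rewrite nbr_sq_sum_reflect. apply (Hd t (- x)%Z Ht).
Qed.

Lemma solution_diff_ineq_on (P : R -> R -> Prop) a b M w s0 s S :
  (forall r, P r r) -> solution_from a b M w s0 -> s0 <= s -> 0 <= S ->
  diff_ineq_on P a b M w s S.
Proof.
  intros HP [Hb [Hc Hd]] Hs HS. split; [|split].
  - intros t y Ht. apply Hb. lra.
  - intros y. destruct (Req_dec s s0) as [->|E]; [apply Hc|].
    apply (derivable_pt_lim_right_cont _ _ _ (Hd s y ltac:(lra))).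
  - exists (fun t y => mf_rhs a b M (w t) y). intros t y Ht.
    split; [apply Hd; lra|apply HP].
Qed.

Lemma mf_solution_subsol_on a b M v s S : mf_solution a b M v -> 0 <= s -> 0 <= S ->
  subsol_on a b M v s S.
Proof. intros Hv. apply solution_diff_ineq_on; [apply Rle_refl|apply mf_solution_from, Hv]. Qed.

Lemma mf_solution_supersol_on a b M v s S : mf_solution a b M v -> 0 <= s -> 0 <= S ->
  supersol_on a b M v s S.
Proof. intros Hv. apply solution_diff_ineq_on; [apply Rge_refl|apply mf_solution_from, Hv]. Qed.

Lemma diff_ineq_on_restrict P a b M w s S s' S' : diff_ineq_on P a b M w s S ->
  s <= s' -> 0 <= S' -> s' + S' <= s + S -> diff_ineq_on P a b M w s' S'.
Proof.
  intros [Hb [Hc [dw Hd]]] H1 H2 H3. split; [|split].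
  - intros t y Ht. apply Hb. lra.
  - intros y. destruct (Req_dec s' s) as [->|E]; [apply Hc|].
    apply (derivable_pt_lim_right_cont _ _ (dw s' y)), Hd. lra.
  - exists dw. intros t y Ht. apply Hd. lra.
Qed.

Definition ramp (l sg s : R) : R -> Z -> R := fun t _ => l + sg * (t - s).

Lemma derivable_pt_lim_ramp l sg s t : derivable_pt_lim (fun q => l + sg * (q - s)) t sg.
Proof.
  intros eps Heps. exists (mkposreal 1 Rlt_0_1). intros h Hh _.
  replace ((l + sg * (t + h - s) - (l + sg * (t - s))) / h - sg) with 0 by (field; exact Hh).
  rewrite Rabs_R0. exact Heps.
Qed.

Lemma ramp_diff_ineq_on (P : R -> R -> Prop) a b M l sg s S : (1 <= M)%nat ->
  (forall q, s <= q <= s + S -> 0 <= l + sg * (q - s) <= 1) ->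
  (forall q, s < q <= s + S -> P sg (reaction (a + b) (l + sg * (q - s)))) ->
  diff_ineq_on P a b M (ramp l sg s) s S.
Proof.
  intros HM Hb HP. unfold ramp. split; [|split].
  - intros t y Ht. apply Hb, Ht.
  - intros y. apply (derivable_pt_lim_right_cont _ _ _ (derivable_pt_lim_ramp l sg s s)).
  - exists (fun _ _ => sg). intros t y Ht.
    split; [apply derivable_pt_lim_ramp|rewrite mf_rhs_const by exact HM; apply HP, Ht].
Qed.

Definition deep_in (G : Z -> Prop) (M n : nat) (y : Z) : Prop :=
  forall z, (Z.abs (z - y) <= Z.of_nat (n * M))%Z -> G z.

Lemma deep_in_self G M n y : deep_in G M n y -> G y.
Proof. intros H. apply H. rewrite Z.sub_diag. simpl. lia. Qed.

Lemma deep_in_neighbour G M n y z : deep_in G M (S n) y ->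
  (Z.abs (z - y) <= Z.of_nat M)%Z -> deep_in G M n z.
Proof. intros H Hz z' Hz'. apply H. rewrite Nat.mul_succ_l, Nat2Z.inj_add. lia. Qed.

Lemma deep_in_le G M n n' y : (n <= n')%nat -> deep_in G M n' y -> deep_in G M n y.
Proof.
  intros Hn H z Hz. apply H.
  assert (Z.of_nat (n * M) <= Z.of_nat (n' * M))%Z by (apply Nat2Z.inj_le; nia). lia.
Qed.

Lemma deep_in_add G M n k y : deep_in G M (n + k) y -> deep_in (deep_in G M k) M n y.
Proof. intros H z Hz z' Hz'. apply H. rewrite Nat.mul_add_distr_r, Nat2Z.inj_add. lia. Qed.

Lemma deep_in_window W M n y : (Z.abs y <= W - Z.of_nat (n * M))%Z ->
  deep_in (fun z => (Z.abs z <= W)%Z) M n y.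
Proof. intros H z Hz. lia. Qed.

Lemma deep_in_halfline W M n y : (- W + Z.of_nat (n * M) <= y)%Z ->
  deep_in (fun z => (- W <= z)%Z) M n y.
Proof. intros H z Hz. lia. Qed.

Section LocalComparison.

Variables (a b : R) (M : nat).
Hypotheses (Ha : 0 < a) (Hb : 0 < b) (HM : (1 <= M)%nat).

(* Each neighbourhood step into [G] halves the part of the error not coming from [G],
   provided the window is short compared with the Lipschitz constant [2 (a + b)]. *)
Lemma local_comparison_step w v s T G e : 0 <= T -> 4 * (a + b) * T <= 1 ->
  subsol_on a b M w s T -> supersol_on a b M v s T -> 0 <= e ->
  (forall y, G y -> w s y - v s y <= e) ->
  forall n y, deep_in G M n y -> forall t, s <= t <= s + T ->
    w t y - v t y <= 2 * e + (/ 2) ^ n.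
Proof.
  intros HT HT4 [Bw [Rw [dw Dw]]] [Bv [Rv [dv Dv]]] He HG n.
  induction n as [|n IH]; intros y Hy t Ht.
  - pose proof (Bw t y Ht); pose proof (Bv t y Ht). simpl. lra.
  - set (m := 2 * e + (/ 2) ^ n).
    assert (Hm : 0 <= m) by (unfold m; pose proof (pow_le (/ 2) n); lra).
    assert (Hslope : w t y - v t y <= e + 2 * (a + b) * m * (t - s)).
    { apply (slope_bound_above (fun q => w q y - v q y) (fun q => dw q y - dv q y)).
      - lra.
      - nra.
      - intros eps Heps.
        destruct (Rw y (eps / 2)) as [d1 [Hd1 H1]]; [lra|].
        destruct (Rv y (eps / 2)) as [d2 [Hd2 H2]]; [lra|].
        exists (Rmin d1 d2); split; [apply Rmin_glb_lt; lra|]. intros q Hq.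
        pose proof (Rmin_l d1 d2); pose proof (Rmin_r d1 d2).
        assert (A1 : Rabs (w q y - w s y) < eps / 2) by (apply H1; lra).
        assert (A2 : Rabs (v q y - v s y) < eps / 2) by (apply H2; lra).
        apply Rabs_def2 in A1; apply Rabs_def2 in A2. apply Rabs_def1; lra.
      - apply HG, (deep_in_self G M (S n)), Hy.
      - intros q Hq. apply derivable_pt_lim_minus; [apply (Dw q y)|apply (Dv q y)]; lra.
      - intros q Hq Hgt.
        destruct (Dw q y) as [_ Hw]; [lra|]. destruct (Dv q y) as [_ Hv]; [lra|].
        assert (mf_rhs a b M (w q) y - mf_rhs a b M (v q) y <= 2 * (a + b) * m).
        { apply mf_rhs_diff_le; auto.
          - intros z; apply Bw; lra.
          - intros z; apply Bv; lra.
          - intros z Hz. apply IH; [apply (deep_in_neighbour G M n y z Hy Hz)|lra].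
          - lra. }
        lra. }
    assert (2 * (a + b) * m * (t - s) <= m / 2).
    { assert (2 * (a + b) * m * (t - s) <= 2 * (a + b) * m * T)
        by (apply Rmult_le_compat_l; [nra|lra]).
      nra. }
    simpl. unfold m in *. lra.
Qed.

Lemma local_comparison_iter w v s T G e k : 0 <= T -> 4 * (a + b) * T <= 1 ->
  subsol_on a b M w s (INR k * T) -> supersol_on a b M v s (INR k * T) -> 0 <= e ->
  (forall y, G y -> w s y - v s y <= e) ->
  forall n y, deep_in G M (k * n) y -> forall t, s <= t <= s + INR k * T ->
    w t y - v t y <= 2 ^ k * (e + (/ 2) ^ n) - (/ 2) ^ n.
Proof.
  intros HT HT4 Hw Hv He HG n. pose proof (pow_le (/ 2) n ltac:(lra)) as Hnu.
  induction k as [|k IH]; intros y Hy t Ht.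
  - simpl in Ht |- *. replace t with s by lra.
    apply Rle_trans with e; [apply HG, (deep_in_self G M 0), Hy|lra].
  - rewrite S_INR in Hw, Hv, Ht.
    assert (HkT : 0 <= INR k * T) by (apply Rmult_le_pos; [apply pos_INR|lra]).
    specialize (IH (diff_ineq_on_restrict _ _ _ _ _ _ _ s _ Hw ltac:(lra) HkT ltac:(lra))
                   (diff_ineq_on_restrict _ _ _ _ _ _ _ s _ Hv ltac:(lra) HkT ltac:(lra))).
    pose proof (pow_R1_Rle 2 k ltac:(lra)).
    destruct (Rle_or_lt t (s + INR k * T)) as [Hle|Hgt].
    + apply Rle_trans with (2 ^ k * (e + (/ 2) ^ n) - (/ 2) ^ n).
      * apply IH; [apply (deep_in_le _ _ _ (S k * n)); [nia|exact Hy]|lra].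
      * simpl. nra.
    + set (s' := s + INR k * T).
      assert (Hstep := local_comparison_step w v s' T (deep_in G M (k * n))
                         (2 ^ k * (e + (/ 2) ^ n) - (/ 2) ^ n) HT HT4
                         (diff_ineq_on_restrict _ _ _ _ _ _ _ s' T Hw ltac:(unfold s'; lra)
                            HT ltac:(unfold s'; lra))
                         (diff_ineq_on_restrict _ _ _ _ _ _ _ s' T Hv ltac:(unfold s'; lra)
                            HT ltac:(unfold s'; lra))
                         ltac:(nra) ltac:(intros z Hz; apply IH; [exact Hz|unfold s'; lra])
                         n y).
      assert (Hr : w t y - v t y <= 2 * (2 ^ k * (e + (/ 2) ^ n) - (/ 2) ^ n) + (/ 2) ^ n).
      { apply Hstep; [|unfold s'; lra].
        apply deep_in_add. replace (n + k * n)%nat with (S k * n)%nat by lia. exact Hy. }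
      simpl. lra.
Qed.

Definition local_comparison (L : R) (k : nat) : Prop :=
  forall w v s G e, subsol_on a b M w s L -> supersol_on a b M v s L -> 0 <= e ->
  (forall y, G y -> w s y - v s y <= e) ->
  forall n y, deep_in G M (k * n) y -> forall t, s <= t <= s + L ->
    w t y - v t y <= 2 ^ k * (e + (/ 2) ^ n).

Lemma local_comparison_exists L : 0 <= L -> exists k, local_comparison L k.
Proof.
  intros HS. destruct (exists_nat_ge (4 * (a + b) * L)) as [k0 Hk0].
  exists (S k0). intros w v s G e Hw Hv He HG n y Hy t Ht.
  assert (Hk : 0 < INR (S k0)) by (apply lt_0_INR; lia).
  set (T := L / INR (S k0)).
  assert (HkT : INR (S k0) * T = L) by (unfold T; field; lra).
  assert (HT : 0 <= T) by (unfold T; apply Rmult_le_pos; [lra|left; apply Rinv_0_lt_compat, Hk]).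
  assert (HT4 : 4 * (a + b) * T <= 1).
  { apply (Rmult_le_reg_r (INR (S k0))); [lra|].
    replace (4 * (a + b) * T * INR (S k0)) with (4 * (a + b) * L) by (rewrite <- HkT; ring).
    rewrite S_INR in *. lra. }
  rewrite <- HkT in Hw, Hv, Ht.
  pose proof (local_comparison_iter w v s T G e (S k0) HT HT4 Hw Hv He HG n y Hy t Ht).
  pose proof (pow_le (/ 2) n ltac:(lra)). lra.
Qed.

Lemma comparison_principle w v s S : 0 <= S ->
  subsol_on a b M w s S -> supersol_on a b M v s S -> (forall y, w s y <= v s y) ->
  forall t y, s <= t <= s + S -> w t y <= v t y.
Proof.
  intros HS Hw Hv H0 t y Ht.
  destruct (local_comparison_exists S HS) as [k Hk].
  assert (w t y - v t y <= 0); [|lra].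
  apply (le_0_of_le_pow_half _ (2 ^ k)). intros n.
  pose proof (Hk w v s (fun _ => True) 0 Hw Hv (Rle_refl 0)
                 ltac:(intros z _; specialize (H0 z); lra) n y ltac:(intros z _; exact I) t Ht).
  lra.
Qed.

End LocalComparison.

Lemma window_comparison a b M L k w v s W : local_comparison a b M L k ->
  subsol_on a b M w s L -> supersol_on a b M v s L ->
  (forall y, (Z.abs y <= W)%Z -> w s y <= v s y) ->
  forall n t y, s <= t <= s + L -> (Z.abs y <= W - Z.of_nat (k * n * M))%Z ->
    w t y - v t y <= 2 ^ k * (/ 2) ^ n.
Proof.
  intros Hk Hw Hv H0 n t y Ht Hy.
  rewrite <- (Rplus_0_l ((/ 2) ^ n)).
  apply (Hk w v s (fun z => (Z.abs z <= W)%Z) 0 Hw Hv (Rle_refl 0)); [|apply deep_in_window, Hy|exact Ht].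
  intros z Hz. specialize (H0 z Hz). lra.
Qed.

Lemma rising_barrier a b M L k kap al be : (1 <= M)%nat -> local_comparison a b M L k ->
  0 <= L -> 0 <= kap -> 0 <= al -> be <= 1 ->
  (forall y, al <= y <= be -> kap <= reaction (a + b) y) ->
  forall v, mf_solution a b M v -> forall s W l, 0 <= s -> al <= l -> l + kap * L <= be ->
  (forall y, (Z.abs y <= W)%Z -> l <= v s y) ->
  forall n t y, s <= t <= s + L -> (Z.abs y <= W - Z.of_nat (k * n * M))%Z ->
    l + kap * (t - s) - 2 ^ k * (/ 2) ^ n <= v t y.
Proof.
  intros HM Hk HL Hkap Hal Hbe Hr v Hv s W l Hs Hl1 Hl2 H0 n t y Ht Hy.
  assert (Hrange : forall q, s <= q <= s + L -> al <= l + kap * (q - s) <= be).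
  { intros q Hq. assert (0 <= kap * (q - s) <= kap * L)
      by (split; [apply Rmult_le_pos|apply Rmult_le_compat_l]; lra).
    lra. }
  assert (Hramp : subsol_on a b M (ramp l kap s) s L).
  { apply ramp_diff_ineq_on; [exact HM| |].
    - intros q Hq. specialize (Hrange q Hq). lra.
    - intros q Hq. apply Hr, Hrange. lra. }
  pose proof (window_comparison a b M L k (ramp l kap s) v s W Hk Hramp
                (mf_solution_supersol_on a b M v s L Hv Hs HL)
                ltac:(intros z Hz; unfold ramp; specialize (H0 z Hz); lra) n t y Ht Hy).
  unfold ramp in *. lra.
Qed.

Lemma falling_barrier a b M L k kap al be : (1 <= M)%nat -> local_comparison a b M L k ->
  0 <= L -> 0 <= kap -> 0 <= al -> be <= 1 ->
  (forall y, al <= y <= be -> reaction (a + b) y <= - kap) ->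
  forall v, mf_solution a b M v -> forall s W l, 0 <= s -> al <= l - kap * L -> l <= be ->
  (forall y, (Z.abs y <= W)%Z -> v s y <= l) ->
  forall n t y, s <= t <= s + L -> (Z.abs y <= W - Z.of_nat (k * n * M))%Z ->
    v t y <= l - kap * (t - s) + 2 ^ k * (/ 2) ^ n.
Proof.
  intros HM Hk HL Hkap Hal Hbe Hr v Hv s W l Hs Hl1 Hl2 H0 n t y Ht Hy.
  assert (Hrange : forall q, s <= q <= s + L -> al <= l + - kap * (q - s) <= be).
  { intros q Hq. assert (0 <= kap * (q - s) <= kap * L)
      by (split; [apply Rmult_le_pos|apply Rmult_le_compat_l]; lra).
    lra. }
  assert (Hramp : supersol_on a b M (ramp l (- kap) s) s L).
  { apply ramp_diff_ineq_on; [exact HM| |].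
    - intros q Hq. specialize (Hrange q Hq). lra.
    - intros q Hq. apply Rle_ge, Hr, Hrange. lra. }
  pose proof (window_comparison a b M L k v (ramp l (- kap) s) s W Hk
                (mf_solution_subsol_on a b M v s L Hv Hs HL) Hramp
                ltac:(intros z Hz; unfold ramp; specialize (H0 z Hz); lra) n t y Ht Hy).
  unfold ramp in *. lra.
Qed.

(* Above a level where the reaction is uniformly negative, the spatially constant ramp
   starting from [1] is a supersolution that reaches [uh] at time [(1 - uh) / kap]. *)
Lemma uniform_decay a b M uh kap : 0 < a -> 0 < b -> (1 <= M)%nat -> 0 < uh <= 1 -> 0 < kap ->
  (forall y, uh <= y <= 1 -> reaction (a + b) y <= - kap) ->
  forall v, mf_solution a b M v -> forall s y, (1 - uh) / kap <= s -> v s y <= uh.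
Proof.
  intros Ha Hb HM Huh Hkap Hr v Hv s y Hs.
  set (T := (1 - uh) / kap).
  assert (HT : 0 <= T) by (unfold T; apply Rmult_le_pos; [lra|left; apply Rinv_0_lt_compat, Hkap]).
  assert (HkT : kap * T = 1 - uh) by (unfold T; field; lra).
  assert (HsT : T <= s) by exact Hs. clearbody T.
  set (s0 := s - T).
  assert (Hramp : supersol_on a b M (ramp 1 (- kap) s0) s0 T).
  { apply ramp_diff_ineq_on; [exact HM| |]; intros q Hq;
      assert (0 <= kap * (q - s0) <= kap * T)
        by (split; [apply Rmult_le_pos|apply Rmult_le_compat_l]; lra).
    - lra.
    - apply Rle_ge, Hr. lra. }
  assert (Hcmp := comparison_principle a b M Ha Hb HM v (ramp 1 (- kap) s0) s0 T HT
                    (mf_solution_subsol_on a b M v s0 T Hv ltac:(unfold s0; lra) HT) Hramp).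
  assert (H := Hcmp ltac:(intros z; unfold ramp; destruct Hv as [Hbd _];
                          specialize (Hbd s0 z ltac:(unfold s0; lra)); lra)
                    s y ltac:(unfold s0; lra)).
  unfold ramp, s0 in H. lra.
Qed.

Lemma u_minus_plus_bounds a b : 4 <= a + b ->
  0 <= u_minus a b /\ u_minus a b <= u_plus a b /\ u_plus a b <= 1 /\
  sqrt (/ 4 - / (a + b)) * sqrt (/ 4 - / (a + b)) = / 4 - / (a + b).
Proof.
  intros Hr.
  assert (Hinv : 0 < / (a + b) <= / 4) by (split; [apply Rinv_0_lt_compat|apply Rinv_le_contravar]; lra).
  assert (Hw2 := sqrt_sqrt (/ 4 - / (a + b)) ltac:(lra)).
  pose proof (sqrt_pos (/ 4 - / (a + b))).
  assert (sqrt (/ 4 - / (a + b)) <= / 2) by nra.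
  unfold u_minus, u_plus. repeat split; lra.
Qed.

Lemma reaction_factor a b y : 4 <= a + b ->
  reaction (a + b) y = y * (a + b) * (y - u_minus a b) * (u_plus a b - y).
Proof.
  intros Hr. destruct (u_minus_plus_bounds a b Hr) as [_ [_ [_ Hw2]]].
  unfold reaction, u_minus, u_plus. set (w := sqrt (/ 4 - / (a + b))) in *.
  replace (y * (a + b) * (y - (/ 2 - w)) * (/ 2 + w - y))
    with (y * (a + b) * (w * w - (y - / 2) ^ 2)) by ring.
  rewrite Hw2. field. lra.
Qed.

Lemma mult4_le_compat x1 x2 x3 x4 y1 y2 y3 y4 :
  0 <= x1 <= y1 -> 0 <= x2 <= y2 -> 0 <= x3 <= y3 -> 0 <= x4 <= y4 ->
  x1 * x2 * x3 * x4 <= y1 * y2 * y3 * y4.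
Proof.
  intros. repeat apply Rmult_le_compat; try lra; repeat apply Rmult_le_pos; lra.
Qed.

Lemma reaction_pos_between a b al be : 4 <= a + b ->
  u_minus a b < al -> be < u_plus a b ->
  exists k, 0 < k /\ forall y, al <= y <= be -> k <= reaction (a + b) y.
Proof.
  intros Hr H1 H2. destruct (u_minus_plus_bounds a b Hr) as [Hum _].
  exists (al * (a + b) * (al - u_minus a b) * (u_plus a b - be)).
  split; [repeat apply Rmult_lt_0_compat; lra|].
  intros y Hy. rewrite reaction_factor by exact Hr. apply mult4_le_compat; lra.
Qed.

Lemma reaction_neg_between a b al be : 4 <= a + b -> 0 < al -> be < u_minus a b ->
  exists k, 0 < k /\ forall y, al <= y <= be -> reaction (a + b) y <= - k.
Proof.
  intros Hr H1 H2. destruct (u_minus_plus_bounds a b Hr) as [Hum [Hup _]].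
  exists (al * (a + b) * (u_minus a b - be) * (u_plus a b - be)).
  split; [repeat apply Rmult_lt_0_compat; lra|].
  intros y Hy. rewrite reaction_factor by exact Hr.
  assert (al * (a + b) * (u_minus a b - be) * (u_plus a b - be)
          <= y * (a + b) * (u_minus a b - y) * (u_plus a b - y)) by (apply mult4_le_compat; lra).
  nra.
Qed.

Lemma reaction_neg_above a b uh : 0 < a -> 0 < b -> 0 < uh ->
  (a + b < 4 \/ 4 <= a + b /\ u_plus a b < uh) ->
  exists k, 0 < k /\ forall y, uh <= y <= 1 -> reaction (a + b) y <= - k.
Proof.
  intros Ha Hb Huh [Hr|[Hr Hup]].
  - exists (uh * (1 - (a + b) / 4)). split; [apply Rmult_lt_0_compat; lra|].
    intros y Hy. unfold reaction.
    assert (y * (1 - y) <= / 4) by (pose proof (pow2_ge_0 (y - / 2)); nra).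
    assert ((a + b) * (y * (1 - y)) <= (a + b) * / 4) by (apply Rmult_le_compat_l; lra).
    replace ((a + b) * y ^ 2 * (1 - y) - y) with (y * ((a + b) * (y * (1 - y)) - 1)) by ring.
    nra.
  - destruct (u_minus_plus_bounds a b Hr) as [Hum [Humup _]].
    exists (uh * (a + b) * (uh - u_minus a b) * (uh - u_plus a b)).
    split; [repeat apply Rmult_lt_0_compat; lra|].
    intros y Hy. rewrite reaction_factor by exact Hr.
    assert (uh * (a + b) * (uh - u_minus a b) * (uh - u_plus a b)
            <= y * (a + b) * (y - u_minus a b) * (y - u_plus a b)) by (apply mult4_le_compat; lra).
    nra.
Qed.

Lemma Z_nonincreasing (f : Z -> R) : (forall x, f (x + 1)%Z <= f x) ->
  forall x y, (x <= y)%Z -> f y <= f x.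
Proof.
  intros Hf x y Hxy. replace y with (x + Z.of_nat (Z.to_nat (y - x)))%Z by lia.
  induction (Z.to_nat (y - x)) as [|d IH]; [rewrite Z.add_0_r; lra|].
  rewrite Nat2Z.inj_succ, Z.add_succ_r, <- Z.add_1_r. eapply Rle_trans; [apply Hf|exact IH].
Qed.

(* Comparison of the solution with its own translate by one site. *)
Lemma solution_nonincreasing a b M E : 0 < a -> 0 < b -> (1 <= M)%nat ->
  mf_solution a b M E -> (forall x, E 0 (x + 1)%Z <= E 0 x) ->
  forall t, 0 <= t -> forall x, E t (x + 1)%Z <= E t x.
Proof.
  intros Ha Hb HM HE H0 t Ht x.
  assert (Hsh : solution_from a b M (translate E 0 (-1)) 0).
  { rewrite <- (Rplus_0_l 0) at 2. apply translate_solution_from, mf_solution_from, HE. }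
  pose proof (comparison_principle a b M Ha Hb HM (translate E 0 (-1)) E 0 t Ht
                (solution_diff_ineq_on Rle a b M _ 0 0 t Rle_refl Hsh (Rle_refl 0) Ht)
                (mf_solution_supersol_on a b M E 0 t HE (Rle_refl 0) Ht)) as Hcmp.
  unfold translate in Hcmp.
  assert (H := Hcmp ltac:(intros y; rewrite Rminus_0_r; replace (y - -1)%Z with (y + 1)%Z by lia;
                          apply H0) t x ltac:(lra)).
  rewrite Rminus_0_r in H. replace (x - -1)%Z with (x + 1)%Z in H by lia. exact H.
Qed.

(* Expansion makes the step front of height [p] advance by one site in time [t0]; comparing
   [v] with a translate of this front pushes the region where [v] is close to [p] outwards. *)
Lemma expansion_front_step a b M p E t0 k : 0 < a -> 0 < b -> (1 <= M)%nat ->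
  local_comparison a b M t0 k -> mf_solution a b M E ->
  (forall x, E 0 x = if (x <=? 0)%Z then p else 0) -> 0 <= p -> 0 <= t0 -> E t0 1%Z = p ->
  forall v, mf_solution a b M v -> forall n s W e, 0 <= s -> 0 <= e ->
  (Z.of_nat (k * n * M) <= W)%Z ->
  (forall y, (Z.abs y <= W)%Z -> p - e <= v s y) ->
  forall y, (Z.abs y <= W + 1)%Z -> p - 2 ^ k * (e + (/ 2) ^ n) <= v (s + t0) y.
Proof.
  intros Ha Hb HM Hk HE H0 Hp Ht0 Hfront v Hv n s W e Hs He HW Hin.
  assert (Hahead : forall x, (x <= 1)%Z -> p <= E t0 x).
  { intros x Hx. rewrite <- Hfront. apply Z_nonincreasing; [|exact Hx].
    apply (solution_nonincreasing a b M E Ha Hb HM HE); [|exact Ht0].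
    intros y. rewrite !H0. destruct (Z.leb_spec (y + 1) 0), (Z.leb_spec y 0); lra || lia. }
  assert (Hone : forall v', solution_from a b M v' 0 ->
            (forall y, (Z.abs y <= W)%Z -> p - e <= v' s y) ->
            forall y, (- W + Z.of_nat (k * n * M) <= y <= W + 1)%Z ->
              p - 2 ^ k * (e + (/ 2) ^ n) <= v' (s + t0) y).
  { intros v' Hv' Hin' y Hy.
    assert (Hw : solution_from a b M (translate E s W) s).
    { rewrite <- (Rplus_0_l s) at 2. apply translate_solution_from, mf_solution_from, HE. }
    assert (Hinit : forall z, (- W <= z)%Z -> translate E s W s z - v' s z <= e).
    { intros z Hz. unfold translate. rewrite Rminus_diag, H0.
      destruct (Z.leb_spec (z - W) 0).
      - specialize (Hin' z ltac:(lia)). lra.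
      - destruct Hv' as [Hbd _]. specialize (Hbd s z Hs). lra. }
    assert (H := Hk (translate E s W) v' s (fun z => (- W <= z)%Z) e
                   (solution_diff_ineq_on Rle a b M _ s s t0 Rle_refl Hw (Rle_refl s) Ht0)
                   (solution_diff_ineq_on Rge a b M _ 0 s t0 Rge_refl Hv' Hs Ht0) He Hinit
                   n y ltac:(apply deep_in_halfline; lia) (s + t0) ltac:(lra)).
    unfold translate in H. replace (s + t0 - s) with t0 in H by ring.
    specialize (Hahead (y - W)%Z ltac:(lia)). lra. }
  intros y Hy. destruct (Z_le_gt_dec (- W + Z.of_nat (k * n * M)) y).
  - apply Hone; [apply mf_solution_from, Hv|exact Hin|lia].
  - replace y with (- - y)%Z by lia.
    apply (Hone (reflect v)); [apply reflect_solution_from, mf_solution_from, Hv| |lia].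
    intros z Hz. apply Hin. lia.
Qed.

Lemma retreat_front_step a b M p uh R t0 k : 0 < a -> 0 < b -> (1 <= M)%nat ->
  local_comparison a b M t0 k -> mf_solution a b M R ->
  (forall x, R 0 x = if (x <? 0)%Z then uh else p) -> p <= uh -> 0 <= t0 -> R t0 (-1)%Z = p ->
  forall v, mf_solution a b M v -> forall n s W e, 0 <= s -> 0 <= e ->
  (Z.of_nat (k * n * M) <= W)%Z -> (forall y, v s y <= uh) ->
  (forall y, (Z.abs y <= W)%Z -> v s y <= p + e) ->
  forall y, (Z.abs y <= W + 1)%Z -> v (s + t0) y <= p + 2 ^ k * (e + (/ 2) ^ n).
Proof.
  intros Ha Hb HM Hk HR H0 Hp Ht0 Hfront v Hv n s W e Hs He HW Hup Hin.
  assert (Hbehind : forall x, (-1 <= x)%Z -> R t0 x <= p).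
  { intros x Hx. rewrite <- Hfront. apply Z_nonincreasing; [|exact Hx].
    apply (solution_nonincreasing a b M R Ha Hb HM HR); [|exact Ht0].
    intros y. rewrite !H0. destruct (Z.ltb_spec (y + 1) 0), (Z.ltb_spec y 0); lra || lia. }
  assert (Hone : forall v', solution_from a b M v' 0 -> (forall y, v' s y <= uh) ->
            (forall y, (Z.abs y <= W)%Z -> v' s y <= p + e) ->
            forall y, (- W + Z.of_nat (k * n * M) <= y <= W + 1)%Z ->
              v' (s + t0) y <= p + 2 ^ k * (e + (/ 2) ^ n)).
  { intros v' Hv' Hup' Hin' y Hy.
    assert (Hw : solution_from a b M (translate (reflect R) s W) s).
    { rewrite <- (Rplus_0_l s) at 2.
      apply translate_solution_from, reflect_solution_from, mf_solution_from, HR. }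
    assert (Hinit : forall z, (- W <= z)%Z -> v' s z - translate (reflect R) s W s z <= e).
    { intros z Hz. unfold translate, reflect. rewrite Rminus_diag, H0.
      destruct (Z.ltb_spec (- (z - W)) 0).
      - specialize (Hup' z). lra.
      - specialize (Hin' z ltac:(lia)). lra. }
    assert (H := Hk v' (translate (reflect R) s W) s (fun z => (- W <= z)%Z) e
                   (solution_diff_ineq_on Rle a b M _ 0 s t0 Rle_refl Hv' Hs Ht0)
                   (solution_diff_ineq_on Rge a b M _ s s t0 Rge_refl Hw (Rle_refl s) Ht0) He Hinit
                   n y ltac:(apply deep_in_halfline; lia) (s + t0) ltac:(lra)).
    unfold translate, reflect in H. replace (s + t0 - s) with t0 in H by ring.
    specialize (Hbehind (- (y - W))%Z ltac:(lia)). lra. }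
  intros y Hy. destruct (Z_le_gt_dec (- W + Z.of_nat (k * n * M)) y).
  - apply Hone; [apply mf_solution_from, Hv|exact Hup|exact Hin|lia].
  - replace y with (- - y)%Z by lia.
    apply (Hone (reflect v)); [apply reflect_solution_from, mf_solution_from, Hv| | |lia].
    + intros z. apply Hup.
    + intros z Hz. apply Hin. lia.
Qed.

Definition above_on (V : R -> Z -> R) (l s : R) (W : Z) : Prop :=
  forall y, (Z.abs y <= W)%Z -> l <= V s y.

Section Spreading.

(* One cycle: [J] front steps of length [t0], each gaining one site at a cost that
   multiplies the error by [A] and adds [nu], then a rise of length [T], whose gain
   [kap * T] absorbs the accumulated error. *)
Variables (V : R -> Z -> R) (p eta t0 T kap A nu nu' : R) (B N : Z) (J : nat).
Hypotheses (Ht0 : 0 < t0) (HT : 0 < T) (Heta : 0 < eta) (HkT : kap * T = 4 * eta)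
  (HA : 1 <= A) (Hnu : 0 <= nu) (Hnu' : nu' <= eta / 4) (Herr : INR J * A ^ J * nu <= eta / 4)
  (HB : (0 <= B)%Z) (HJ : Z.of_nat J = (N + 1)%Z).
Hypothesis front : forall s W e, T <= s -> (B <= W)%Z -> 0 <= e -> above_on V (p - e) s W ->
  forall y, (Z.abs y <= W + 1)%Z -> p - A * (e + nu) <= V (s + t0) y.
Hypothesis stay : forall s W l, T <= s -> p - eta / 4 <= l <= p -> above_on V l s W ->
  forall t y, s <= t <= s + t0 -> (Z.abs y <= W - B)%Z -> l - A * nu <= V t y.
Hypothesis rise : forall s W l, 0 <= s -> p - 2 * eta <= l <= p -> above_on V l s W ->
  forall t y, s <= t <= s + T -> (Z.abs y <= W - N)%Z -> l + kap * (t - s) - nu' <= V t y.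

Let Tc := INR J * t0 + T.

Lemma spreading_period_pos : 0 < Tc.
Proof. unfold Tc. pose proof (pos_INR J). nra. Qed.

Lemma spreading_err_le j : (j <= J)%nat -> INR j * A ^ j * nu <= eta / 4.
Proof.
  intros Hj. apply Rle_trans with (INR J * A ^ J * nu); [|exact Herr].
  apply Rmult_le_compat_r; [exact Hnu|].
  apply Rmult_le_compat; [apply pos_INR|apply pow_le; lra|apply le_INR, Hj|apply Rle_pow; auto].
Qed.

Lemma spreading_err_step j : A * (INR j * A ^ j * nu + nu) <= INR (S j) * A ^ S j * nu.
Proof.
  rewrite S_INR. simpl. pose proof (pow_R1_Rle A j HA).
  assert (0 <= A * nu * (A ^ j - 1)) by (repeat apply Rmult_le_pos; lra).
  lra.
Qed.

Lemma spreading_front_steps s W : T <= s -> (B <= W)%Z -> above_on V p s W ->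
  forall j, (j <= J)%nat ->
    above_on V (p - INR j * A ^ j * nu) (s + INR j * t0) (W + Z.of_nat j) /\
    forall t x, s <= t <= s + INR j * t0 -> (Z.abs x <= W - B)%Z -> p - eta / 2 <= V t x.
Proof.
  intros Hs HW H0. induction j as [|j IH]; intros Hj.
  - simpl INR. rewrite Z.add_0_r. split.
    + intros y Hy. replace (s + 0 * t0) with s by ring. replace (p - 0 * A ^ 0 * nu) with p by ring.
      exact (H0 y Hy).
    + intros t x Ht Hx. replace t with s by lra. specialize (H0 x ltac:(lia)). lra.
  - destruct (IH ltac:(lia)) as [Habove Hmid].
    set (err := INR j * A ^ j * nu) in *.
    assert (Herr_next : A * (err + nu) <= eta / 4)
      by (eapply Rle_trans; [apply spreading_err_step|apply spreading_err_le, Hj]).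
    assert (0 <= err) by (repeat apply Rmult_le_pos; [apply pos_INR|apply pow_le|]; lra).
    assert (0 <= A * err) by (apply Rmult_le_pos; lra).
    assert (Hsj : T <= s + INR j * t0) by (pose proof (pos_INR j); nra).
    split.
    + intros y Hy. replace (s + INR (S j) * t0) with (s + INR j * t0 + t0) by (rewrite S_INR; ring).
      pose proof (front _ (W + Z.of_nat j)%Z err Hsj ltac:(lia) ltac:(lra) Habove y ltac:(lia)).
      pose proof (spreading_err_step j) as Hstep. fold err in Hstep. lra.
    + intros t x Ht Hx. destruct (Rle_or_lt t (s + INR j * t0)) as [Hle|Hgt]; [apply Hmid; [lra|exact Hx]|].
      rewrite S_INR in Ht. assert (err <= eta / 4) by (apply spreading_err_le; lia).
      pose proof (stay _ _ (p - err) Hsj ltac:(lra) Habove t x ltac:(lra) ltac:(lia)). lra.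
Qed.

Lemma spreading_cycle s W : T <= s -> (B <= W)%Z -> above_on V p s W ->
  above_on V p (s + Tc) (W + 1) /\
  forall t x, s <= t <= s + Tc -> (Z.abs x <= W - B)%Z -> p - eta / 2 <= V t x.
Proof.
  intros Hs HW H0.
  destruct (spreading_front_steps s W Hs HW H0 J (le_n J)) as [Habove Hmid].
  assert (HsJ : 0 <= s + INR J * t0) by (pose proof (pos_INR J); nra).
  assert (0 <= INR J * A ^ J * nu) by (repeat apply Rmult_le_pos; [apply pos_INR|apply pow_le|]; lra).
  pose proof (rise _ _ (p - INR J * A ^ J * nu) HsJ ltac:(lra) Habove) as Hrise.
  unfold Tc. split.
  - intros y Hy. replace (s + (INR J * t0 + T)) with (s + INR J * t0 + T) by ring.
    pose proof (Hrise (s + INR J * t0 + T) y ltac:(lra) ltac:(lia)). lra.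
  - intros t x Ht Hx. destruct (Rle_or_lt t (s + INR J * t0)) as [Hle|Hgt]; [apply Hmid; [lra|exact Hx]|].
    pose proof (Hrise t x ltac:(lra) ltac:(lia)).
    assert (0 <= kap * (t - (s + INR J * t0))) by (apply Rmult_le_pos; nra). lra.
Qed.

Lemma spreading_invariant : above_on V (p - 2 * eta) 0 (B + N) ->
  forall i : nat, above_on V p (T + INR i * Tc) (B + Z.of_nat i).
Proof.
  intros H0 i. induction i as [|i IH].
  - intros y Hy. simpl. rewrite Rmult_0_l, Rplus_0_r.
    pose proof (rise 0 (B + N) (p - 2 * eta) (Rle_refl 0) ltac:(lra) H0 T y ltac:(lra) ltac:(lia)).
    lra.
  - assert (Hs : T <= T + INR i * Tc)
      by (pose proof (pos_INR i); pose proof spreading_period_pos; nra).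
    destruct (spreading_cycle _ (B + Z.of_nat i)%Z Hs ltac:(lia) IH) as [Hnext _].
    intros y Hy. rewrite S_INR. replace (T + (INR i + 1) * Tc) with (T + INR i * Tc + Tc) by ring.
    apply Hnext. lia.
Qed.

Lemma spreading_cone : above_on V (p - 2 * eta) 0 (B + N) ->
  forall t x, IZR (Z.abs x) <= / Tc * t - (T / Tc + 1) -> p - eta / 2 <= V t x.
Proof.
  intros H0 t x Hx.
  pose proof spreading_period_pos as HTc.
  pose proof (IZR_le 0 (Z.abs x) ltac:(lia)) as Hax.
  assert (Hcone : / Tc * t - (T / Tc + 1) = (t - T) / Tc - 1) by (field; lra).
  destruct (exists_nat_floor ((t - T) / Tc) ltac:(lra)) as [i [Hi1 Hi2]].
  assert (Hxi : (Z.abs x < Z.of_nat i)%Z) by (apply lt_IZR; rewrite <- INR_IZR_INZ; lra).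
  assert (Ht : T + INR i * Tc <= t <= T + INR i * Tc + Tc).
  { apply (Rmult_le_compat_r Tc) in Hi1; [|lra]. apply Rlt_le in Hi2.
    apply (Rmult_le_compat_r Tc) in Hi2; [|lra].
    replace ((t - T) / Tc * Tc) with (t - T) in Hi1, Hi2 by (field; lra). lra. }
  assert (Hs : T <= T + INR i * Tc) by (pose proof (pos_INR i); nra).
  apply (proj2 (spreading_cycle _ (B + Z.of_nat i)%Z Hs ltac:(lia) (spreading_invariant H0 i))); [exact Ht|lia].
Qed.

End Spreading.

(* Choice of the depths [n], [n'] making the errors of the cycle small; [k] and [k'] are the
   local comparison constants for windows of length [t0] and [T]. *)
Lemma spreading (M k k' : nat) (p eta t0 T kap : R) :
  0 < t0 -> 0 < T -> 0 < eta -> kap * T = 4 * eta ->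
  exists L x0 c, 0 < L /\ 0 < x0 /\ 0 < c /\ forall V : R -> Z -> R,
  (forall n s W e, T <= s -> (Z.of_nat (k * n * M) <= W)%Z -> 0 <= e ->
     above_on V (p - e) s W ->
     forall y, (Z.abs y <= W + 1)%Z -> p - 2 ^ k * (e + (/ 2) ^ n) <= V (s + t0) y) ->
  (forall n s W l, T <= s -> p - eta / 4 <= l <= p -> above_on V l s W ->
     forall t y, s <= t <= s + t0 -> (Z.abs y <= W - Z.of_nat (k * n * M))%Z ->
       l - 2 ^ k * (/ 2) ^ n <= V t y) ->
  (forall n s W l, 0 <= s -> p - 2 * eta <= l <= p -> above_on V l s W ->
     forall t y, s <= t <= s + T -> (Z.abs y <= W - Z.of_nat (k' * n * M))%Z ->
       l + kap * (t - s) - 2 ^ k' * (/ 2) ^ n <= V t y) ->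
  (forall y, IZR (Z.abs y) <= L -> p - 2 * eta <= V 0 y) ->
  forall t x, IZR (Z.abs x) <= c * t - x0 -> p - eta / 2 <= V t x.
Proof.
  intros Ht0 HT Heta HkT.
  destruct (exists_pow_half_le (2 ^ k') (eta / 4) ltac:(lra)) as [n' Hn'].
  set (J := (k' * n' * M + 1)%nat).
  destruct (exists_pow_half_le (INR J * (2 ^ k) ^ J) (eta / 4) ltac:(lra)) as [n Hn].
  set (B := Z.of_nat (k * n * M)). set (N := Z.of_nat (k' * n' * M)).
  set (Tc := INR J * t0 + T).
  assert (HTc : 0 < Tc) by (unfold Tc; pose proof (pos_INR J); nra).
  exists (IZR (B + N) + 1), (T / Tc + 1), (/ Tc).
  split; [pose proof (IZR_le 0 (B + N) ltac:(unfold B, N; lia)); lra|].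
  split; [pose proof (Rdiv_lt_0_compat T Tc HT HTc); lra|].
  split; [apply Rinv_0_lt_compat, HTc|].
  intros V Hfront Hstay Hrise H0 t x Hx.
  apply (spreading_cone V p eta t0 T kap (2 ^ k) ((/ 2) ^ n) (2 ^ k' * (/ 2) ^ n') B N J);
    try assumption.
  - apply pow_R1_Rle. lra.
  - apply pow_le. lra.
  - unfold B. lia.
  - unfold J, N. lia.
  - intros s W e Hs HW He Habove y Hy. apply (Hfront n s W e); assumption.
  - intros s W l Hs Hl Habove t' y Ht' Hy.
    apply (Hstay n s W l); assumption.
  - intros s W l Hs Hl Habove t' y Ht' Hy. apply (Hrise n' s W l); assumption.
  - intros y Hy. apply H0. apply IZR_le in Hy. lra.
Qed.

Lemma exists_rate_within al p be k0 T : al < p < be -> 0 < k0 -> 0 < T ->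
  exists kap, 0 < kap <= k0 /\ al <= p - kap * T /\ p + kap * T <= be.
Proof.
  intros Hp Hk0 HT. set (d := Rmin (be - p) (p - al)).
  assert (Hd : 0 < d /\ d <= be - p /\ d <= p - al)
    by (split; [apply Rmin_glb_lt|split; [apply Rmin_l|apply Rmin_r]]; lra).
  exists (Rmin k0 (d / T)).
  pose proof (Rmin_l k0 (d / T)). pose proof (Rmin_r k0 (d / T)).
  assert (0 < Rmin k0 (d / T)) by (apply Rmin_glb_lt; [|apply Rdiv_lt_0_compat]; lra).
  assert (Rmin k0 (d / T) * T <= d)
    by (apply Rle_trans with (d / T * T); [apply Rmult_le_compat_r; lra|right; field; lra]).
  lra.
Qed.

Definition spreads_above a b M (u L x0 delta c : R) : Prop :=
  forall v, mf_solution a b M v -> (forall x, IZR (Z.abs x) <= L -> u <= v 0 x) ->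
  forall t x, 0 < t -> IZR (Z.abs x) <= c * t - x0 -> u + delta <= v t x.

Definition spreads_below a b M (u L x0 delta c : R) : Prop :=
  forall v, mf_solution a b M v -> (forall x, IZR (Z.abs x) <= L -> v 0 x <= u) ->
  forall t x, 0 < t -> IZR (Z.abs x) <= c * t - x0 -> v t x <= u - delta.

Lemma expansion_spreads a b M p E t0 : 0 < a -> 0 < b -> (1 <= M)%nat -> 4 < a + b ->
  u_minus a b < p < u_plus a b -> mf_solution a b M E ->
  (forall x, E 0 x = if (x <=? 0)%Z then p else 0) -> 0 < t0 -> E t0 1%Z = p ->
  exists u L x0 delta c, 0 < u /\ 0 < L /\ 0 < x0 /\ 0 < delta /\ 0 < c /\
    u_minus a b < u < u_plus a b /\ spreads_above a b M u L x0 delta c.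
Proof.
  intros Ha Hb HM Hr Hp HE H0 Ht0 Hfront.
  destruct (u_minus_plus_bounds a b ltac:(lra)) as [Hum [_ [Hup _]]].
  set (al := (u_minus a b + p) / 2). set (be := (p + u_plus a b) / 2).
  destruct (reaction_pos_between a b al be ltac:(lra) ltac:(unfold al; lra) ltac:(unfold be; lra))
    as [k0 [Hk0 Hreact]].
  destruct (exists_rate_within al p be k0 1 ltac:(unfold al, be; lra) Hk0 Rlt_0_1)
    as [kap [Hkap [Hal Hbe]]].
  set (eta := kap / 4).
  destruct (local_comparison_exists a b M Ha Hb HM t0 ltac:(lra)) as [k Hk].
  destruct (local_comparison_exists a b M Ha Hb HM 1 ltac:(lra)) as [k' Hk'].
  destruct (spreading M k k' p eta t0 1 kap Ht0 Rlt_0_1 ltac:(unfold eta; lra)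
              ltac:(unfold eta; lra)) as [L [x0 [c [HL [Hx0 [Hc Hspread]]]]]].
  exists (p - 2 * eta), L, x0, (3 * eta / 2), c.
  repeat split; try (unfold eta, al in *; lra).
  intros v Hv Hinit t x _ Hx.
  replace (p - 2 * eta + 3 * eta / 2) with (p - eta / 2) by field.
  apply (Hspread v); [| | |exact Hinit|exact Hx].
  - intros n s W e Hs HW He Habove.
    exact (expansion_front_step a b M p E t0 k Ha Hb HM Hk HE H0 ltac:(lra) ltac:(lra) Hfront
             v Hv n s W e ltac:(lra) He HW Habove).
  - intros n s W l Hs Hl Habove t' y Ht' Hy.
    pose proof (rising_barrier a b M t0 k 0 al be HM Hk ltac:(lra) (Rle_refl 0)
                  ltac:(unfold al; lra) ltac:(unfold be; lra)
                  ltac:(intros z Hz; specialize (Hreact z Hz); lra) v Hv s W l ltac:(lra)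
                  ltac:(unfold al, eta in *; lra) ltac:(unfold be, eta in *; lra) Habove n t' y Ht' Hy).
    lra.
  - intros n s W l Hs Hl Habove t' y Ht' Hy.
    apply (rising_barrier a b M 1 k' kap al be HM Hk' ltac:(lra) ltac:(lra)
             ltac:(unfold al; lra) ltac:(unfold be; lra)
             ltac:(intros z Hz; specialize (Hreact z Hz); lra) v Hv s W l Hs
             ltac:(unfold al, eta in *; lra) ltac:(unfold be, eta in *; lra) Habove n t' y Ht' Hy).
Qed.

Lemma retreat_subcritical a b M : 0 < a -> 0 < b -> (1 <= M)%nat -> a + b < 4 ->
  exists u L x0 delta c, 0 < u /\ 0 < L /\ 0 < x0 /\ 0 < delta /\ 0 < c /\
    spreads_below a b M u L x0 delta c.
Proof.
  intros Ha Hb HM Hr.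
  destruct (reaction_neg_above a b (/ 2) Ha Hb ltac:(lra) (or_introl Hr)) as [k [Hk Hreact]].
  assert (Hx0 : 0 < (1 - / 2) / k) by (apply Rdiv_lt_0_compat; lra).
  exists 1, 1, ((1 - / 2) / k), (/ 2), 1.
  repeat split; try lra.
  intros v Hv _ t x _ Hx. pose proof (IZR_le 0 (Z.abs x) ltac:(lia)).
  pose proof (uniform_decay a b M (/ 2) k Ha Hb HM ltac:(lra) Hk Hreact v Hv t x ltac:(lra)).
  lra.
Qed.

Lemma above_on_opp (v : R -> Z -> R) l s W : above_on (fun t x => - v t x) l s W ->
  forall y, (Z.abs y <= W)%Z -> v s y <= - l.
Proof. intros H y Hy. specialize (H y Hy). simpl in H. lra. Qed.

(* The retreating front equals [uh] far to the left, so it dominates only solutions lying below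
   [uh]; by [uniform_decay] every solution does after a fixed time. *)
Lemma retreat_spreads a b M p uh R t0 : 0 < a -> 0 < b -> (1 <= M)%nat -> 4 <= a + b ->
  0 < p < u_minus a b -> u_plus a b < uh <= 1 -> mf_solution a b M R ->
  (forall x, R 0 x = if (x <? 0)%Z then uh else p) -> 0 < t0 -> R t0 (-1)%Z = p ->
  exists u L x0 delta c, 0 < u /\ 0 < L /\ 0 < x0 /\ 0 < delta /\ 0 < c /\
    u < u_minus a b /\ spreads_below a b M u L x0 delta c.
Proof.
  intros Ha Hb HM Hr Hp Huh HR H0 Ht0 Hfront.
  destruct (u_minus_plus_bounds a b Hr) as [Hum [Humup Hup]].
  set (al := p / 2). set (be := (p + u_minus a b) / 2).
  destruct (reaction_neg_between a b al be Hr ltac:(unfold al; lra) ltac:(unfold be; lra))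
    as [k0 [Hk0 Hreact]].
  destruct (reaction_neg_above a b uh Ha Hb ltac:(lra) (or_intror (conj Hr (proj1 Huh))))
    as [k2 [Hk2 Hreact_uh]].
  assert (Hdecay_time : 0 <= (1 - uh) / k2)
    by (apply Rmult_le_pos; [lra|left; apply Rinv_0_lt_compat, Hk2]).
  set (T := (1 - uh) / k2 + 1).
  assert (HT : 0 < T) by (unfold T; lra).
  destruct (exists_rate_within al p be k0 T ltac:(unfold al, be; lra) Hk0 HT)
    as [kap [Hkap [Hal Hbe]]].
  set (eta := kap * T / 4).
  assert (Heta : 0 < eta) by (unfold eta; pose proof (Rmult_lt_0_compat kap T ltac:(lra) HT); lra).
  destruct (local_comparison_exists a b M Ha Hb HM t0 ltac:(lra)) as [k Hk].
  destruct (local_comparison_exists a b M Ha Hb HM T ltac:(lra)) as [k' Hk'].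
  destruct (spreading M k k' (- p) eta t0 T kap Ht0 HT Heta ltac:(unfold eta; lra))
    as [L [x0 [c [HL [Hx0 [Hc Hspread]]]]]].
  exists (p + 2 * eta), L, x0, (3 * eta / 2), c.
  repeat split; try (unfold eta, be in *; lra).
  intros v Hv Hinit t x _ Hx.
  assert (- p - eta / 2 <= - v t x); [|lra].
  apply (Hspread (fun t x => - v t x)); [| | | |exact Hx].
  - intros n s W e Hs HW He Habove y Hy.
    assert (Hbelow : forall y, v s y <= uh)
      by (intros z; apply (uniform_decay a b M uh k2 Ha Hb HM ltac:(lra) Hk2 Hreact_uh v Hv);
          unfold T in Hs; lra).
    pose proof (retreat_front_step a b M p uh R t0 k Ha Hb HM Hk HR H0 ltac:(lra) ltac:(lra) Hfront
                  v Hv n s W e ltac:(lra) He HW Hbelow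
                  ltac:(intros z Hz; pose proof (above_on_opp v _ _ _ Habove z Hz); lra) y Hy).
    lra.
  - intros n s W l Hs Hl Habove t' y Ht' Hy.
    pose proof (falling_barrier a b M t0 k 0 al be HM Hk ltac:(lra) (Rle_refl 0)
                  ltac:(unfold al; lra) ltac:(unfold be; lra)
                  ltac:(intros z Hz; specialize (Hreact z Hz); lra) v Hv s W (- l) ltac:(lra)
                  ltac:(unfold al, eta in *; lra) ltac:(unfold be, eta in *; lra)
                  (above_on_opp v _ _ _ Habove) n t' y Ht' Hy).
    lra.
  - intros n s W l Hs Hl Habove t' y Ht' Hy.
    pose proof (falling_barrier a b M T k' kap al be HM Hk' ltac:(lra) ltac:(lra)
                  ltac:(unfold al; lra) ltac:(unfold be; lra)
                  ltac:(intros z Hz; specialize (Hreact z Hz); lra) v Hv s W (- l) Hs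
                  ltac:(unfold al, eta in *; lra) ltac:(unfold be, eta in *; lra)
                  (above_on_opp v _ _ _ Habove) n t' y Ht' Hy).
    lra.
  - intros y Hy. specialize (Hinit y Hy). lra.
Qed.

Theorem theorem2p1 (a b : R) (M : nat) (ha : 0 < a) (hb : 0 < b) (hM : (1 <= M)%nat) :
  (expansion a b M ->
     exists u L x0 delta c,
       0 < u /\ 0 < L /\ 0 < x0 /\ 0 < delta /\ 0 < c /\
       u_minus a b < u < u_plus a b /\
       forall v, mf_solution a b M v ->
         (forall x, IZR (Z.abs x) <= L -> u <= v 0 x) ->
         forall t x, 0 < t -> IZR (Z.abs x) <= c * t - x0 -> u + delta <= v t x)
  /\
  (retreat a b M ->
     exists u L x0 delta c,
       0 < u /\ 0 < L /\ 0 < x0 /\ 0 < delta /\ 0 < c /\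
       (a + b < 4 \/ u < u_minus a b) /\
       forall v, mf_solution a b M v ->
         (forall x, IZR (Z.abs x) <= L -> v 0 x <= u) ->
         forall t x, 0 < t -> IZR (Z.abs x) <= c * t - x0 -> v t x <= u - delta).
Proof.
  split.
  - intros [Hr [p [Hp [E [HE [H0 [t0 [Ht0 Hfront]]]]]]]].
    exact (expansion_spreads a b M p E t0 ha hb hM Hr Hp HE H0 Ht0 Hfront).
  - intros [Hr|[Hr [p [uh [Hp [_ [Huh [R [HR [H0 [t0 [Ht0 Hfront]]]]]]]]]]]].
    + destruct (retreat_subcritical a b M ha hb hM Hr) as [u [L [x0 [delta [c Hspread]]]]].
      exists u, L, x0, delta, c. intuition.
    + destruct (retreat_spreads a b M p uh R t0 ha hb hM Hr Hp Huh HR H0 Ht0 Hfront)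
        as [u [L [x0 [delta [c Hspread]]]]].
      exists u, L, x0, delta, c. intuition.
Qed.
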